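(* Let $G=(V,\widetilde V,\mathcal E)$ be a bipartite graph with $V=\{v_1,\dots,v_r\}$, $\widetilde V=\{\tilde v_1,\dots,\tilde v_s\}$, $r\le s$, $\mathcal E\subseteq V\times\widetilde V$. Define structured matrices $\bar A\in\{0,*\}^{(s+2)\times(s+2)}$, $\bar B\in\{0,*\}^{(s+2)\times s}$, $\bar C\in\{0,*\}^{r\times(s+2)}$, $\bar K\in\{0,*\}^{s\times r}$ by: $\bar A_{ij}=*$ iff ($i=2$) or ($j=2$) or ($i\in\{3,\dots,s-r+2\}$ and $j\in\{3,\dots,s+2\}$); $\bar B_{ij}=*$ iff $i\in\{s-r+3,\dots,s+2\}$ (any $j$); $\bar C_{ij}=*$ iff $j\in\{3,\dots,s+2\}$ (any $i$); $\bar K_{ij}=*$ iff $(v_j,\tilde v_i)\in\mathcal E$. If $G$ has a perfect matching (a matching of size $r$), then the closed-loop system bipartite graph $\mathcal B(\bar A,\bar B,\bar C,\bar K)$ has a perfect matching.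
   Context: A structured matrix has entries in $\{0,*\}$. For $\bar A\in\{0,*\}^{n\times n}$, $\bar B\in\{0,*\}^{n\times m}$, $\bar C\in\{0,*\}^{p\times n}$, $\bar K\in\{0,*\}^{m\times p}$, the closed-loop system bipartite graph $\mathcal B(\bar A,\bar B,\bar C,\bar K)$ has left vertex set $\{x'_1,\dots,x'_n,u'_1,\dots,u'_m,y'_1,\dots,y'_p\}$, right vertex set $\{x_1,\dots,x_n,u_1,\dots,u_m,y_1,\dots,y_p\}$, and edges: $(x'_j,x_i)$ iff $\bar A_{ji}=*$; $(x'_i,u_j)$ iff $\bar B_{ij}=*$; $(y'_j,x_i)$ iff $\bar C_{ji}=*$; $(u'_i,y_j)$ iff $\bar K_{ij}=*$ (these are the feedback edges, set $\mathcal E_K$); $(u'_i,u_i)$ for all $i\le m$; $(y'_i,y_i)$ for all $i\le p$. A perfect matching is a matching covering every left vertex (both sides have $n+m+p$ vertices). *)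

From mathcomp Require Import all_boot.
Set Implicit Arguments. Unset Strict Implicit. Unset Printing Implicit Defensive.

(* A structured matrix in {0,*}^(a x b): entry true means '*', false means 0.
   Indices are 0-based ordinals: ordinal k corresponds to the paper's index k+1. *)
Definition smat (a b : nat) := 'I_a -> 'I_b -> bool.

(* Vertex type used for both sides of the closed-loop bipartite graph:
   inl i          ~ x_i  (resp. x'_i)
   inr (inl i)    ~ u_i  (resp. u'_i)
   inr (inr i)    ~ y_i  (resp. y'_i) *)
Definition vtx (n m p : nat) := ('I_n + ('I_m + 'I_p))%type.

Definition cl_edge (n m p : nat) (A : smat n n) (B : smat n m) (C : smat p n)
  (K : smat m p) (l r : vtx n m p) : bool :=
  match l, r with
  | inl j, inl i => A j i                 (* (x'_j, x_i) iff A_ji = * *)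
  | inl i, inr (inl j) => B i j           (* (x'_i, u_j) iff B_ij = * *)
  | inr (inr j), inl i => C j i           (* (y'_j, x_i) iff C_ji = * *)
  | inr (inl i), inr (inr j) => K i j     (* (u'_i, y_j) iff K_ij = * *)
  | inr (inl i), inr (inl j) => i == j    (* (u'_i, u_i) *)
  | inr (inr i), inr (inr j) => i == j    (* (y'_i, y_i) *)
  | _, _ => false
  end.

Definition is_matching (L R : finType) (e : L -> R -> bool) (M : {set L * R}) : bool :=
  [forall x in M, e x.1 x.2] &&
  [forall x in M, forall y in M, ((x.1 == y.1) || (x.2 == y.2)) ==> (x == y)].

Definition is_perfect_matching (L R : finType) (e : L -> R -> bool) (M : {set L * R}) : bool :=
  is_matching e M && [forall l : L, exists r : R, (l, r) \in M].

Definition Abar (r s : nat) : smat s.+2 s.+2 := fun i j =>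
  [|| (i == 1 :> nat), (j == 1 :> nat) | [&& 2 <= i, i <= s - r + 1 & 2 <= j]].

Definition Bbar (r s : nat) : smat s.+2 s := fun i _ => s - r + 2 <= i.

Definition Cbar (r s : nat) : smat r s.+2 := fun _ j => 2 <= j.

(* K_ij = * iff (v_j, vt_i) in E; E j i encodes the edge (v_j, vt_i). *)
Definition Kbar (r s : nat) (E : 'I_r -> 'I_s -> bool) : smat s r := fun i j => E j i.

Arguments Abar : clear implicits.
Arguments Bbar : clear implicits.
Arguments Cbar : clear implicits.

(* A left-perfect matching of the closed-loop graph is the graph of an injective map sending every
   left vertex to a neighbour.  Let sg be the injection v_j |-> vt_(sg j) given by the matching of G.
   Rows and columns 2 of A are full, so x'_1 and x'_2 can be swapped onto x_2 and x_1; the middle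
   rows x'_3 .. x'_(s-r+2) are full on columns >= 3 and go to x_(i+r); the last r rows of B are full
   and take the inputs u_(sg j); u'_k goes to y_j through K when k = sg j and to u_k otherwise; and
   C is full on columns >= 3, which receive y'_j |-> x_(j+2).  This map has an explicit left inverse,
   hence is injective. *)
From mathcomp Require Import all_boot.
From mathcomp Require Import zify.

Set Implicit Arguments.
Unset Strict Implicit.
Unset Printing Implicit Defensive.

Section Matchings.
Variables (L R : finType) (e : L -> R -> bool).

Lemma matching_edge (M : {set L * R}) x :
  is_matching e M -> x \in M -> e x.1 x.2.
Proof. by case/andP=> /forallP edgeM _ xM; have /implyP := edgeM x; apply. Qed.

Lemma matching_eq (M : {set L * R}) x y :
  is_matching e M -> x \in M -> y \in M -> (x.1 == y.1) || (x.2 == y.2) -> x = y.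
Proof.
case/andP=> _ /forallP/(_ x)/implyP disjM xM yM xy.
by move/forallP/(_ y)/implyP/(_ yM)/implyP/(_ xy)/eqP: (disjM xM).
Qed.

Lemma matching_full_inj (M : {set L * R}) :
  is_matching e M -> #|M| = #|L| -> exists2 f : L -> R, injective f & forall l, e l (f l).
Proof.
move=> mM cardM.
have fst_inj : {in M &, injective fst}.
  by move=> x y xM yM xy; apply: matching_eq mM xM yM _; rewrite xy eqxx.
have fstM : fst @: M = [set: L].
  by apply/eqP; rewrite eqEcard subsetT card_in_imset // cardsT cardM leqnn.
have cover l : exists r, (l, r) \in M.
  have /imsetP[[l' r] lrM /= ->] : l \in fst @: M by rewrite fstM in_setT.
  by exists r.
have [f fM] := fin_all_exists cover.
exists f => [a b fab|l]; last exact: matching_edge mM (fM l).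
suff [] : (a, f a) = (b, f b) by [].
by apply: matching_eq mM (fM a) (fM b) _; rewrite fab eqxx orbT.
Qed.

Lemma perfect_matching_graph (f : L -> R) :
  injective f -> (forall l, e l (f l)) -> is_perfect_matching e [set (l, f l) | l : L].
Proof.
move=> f_inj fE; rewrite /is_perfect_matching /is_matching -andbA; apply/and3P; split.
- by apply/forallP=> x; apply/implyP=> /imsetP[l _ ->].
- apply/forallP=> x; apply/implyP=> /imsetP[l _ ->].
  apply/forallP=> y; apply/implyP=> /imsetP[l' _ ->] /=.
  by apply/implyP=> /orP[] /eqP => [-> | /f_inj ->].
- by apply/forallP=> l; apply/existsP; exists (f l); apply/imsetP; exists l.
Qed.

End Matchings.

Section ClosedLoopMatching.
Variables (r s : nat) (sg : 'I_r -> 'I_s).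
Hypotheses (le_rs : r <= s) (sg_inj : injective sg).

Local Notation V := (vtx s.+2 s r).

(* [insub (s.+1 - i)] succeeds exactly on the last r rows (there is no truncation as i <= s+1),
   which are sent backwards to the inputs u_(sg (s+1-i)). *)
Definition cl_match (v : V) : V :=
  match v with
  | inl i =>
      if i <= 1 then inl (inord (1 - i))
      else if insub (s.+1 - i) is Some j then inr (inl (sg j)) else inl (inord (i + r))
  | inr (inl k) => if [pick j | sg j == k] is Some j then inr (inr j) else inr (inl k)
  | inr (inr j) => inl (inord (j + 2))
  end.

Definition cl_unmatch (v : V) : V :=
  match v with
  | inl k =>
      if k <= 1 then inl (inord (1 - k))
      else if insub (k - 2) is Some j then inr (inr j) else inl (inord (k - r))
  | inr (inl k) => if [pick j | sg j == k] is Some j then inl (inord (s.+1 - j)) else inr (inl k)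
  | inr (inr j) => inr (inl (sg j))
  end.

Lemma cl_matchK : cancel cl_match cl_unmatch.
Proof.
case=> [i | [k | j]]; rewrite /cl_match /cl_unmatch.
- have lt_i := ltn_ord i.
  case: leqP => [le_i1 | lt1i] /=.
    rewrite inordK ?leq_subr; last lia.
    by congr inl; apply: val_inj; rewrite /= inordK; lia.
  case: insubP => [j _ /= val_j | ge_r] /=.
    case: pickP => [j' /eqP /sg_inj -> | /(_ j) /eqP //] /=.
    by congr inl; apply: val_inj; rewrite /= inordK; lia.
  have {}ge_r : r <= s.+1 - i by rewrite leqNgt.
  rewrite inordK; last lia.
  case: ifP => [|_]; first lia.
  rewrite insubN; last lia.
  by congr inl; apply: val_inj; rewrite /= inordK; lia.
- case: pickP => [j /eqP <- // | no_j] /=.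
  by case: pickP => // j; rewrite no_j.
- have lt_j := ltn_ord j.
  rewrite /= inordK; last lia.
  case: ifP => [|_]; first lia.
  by rewrite addnK valK.
Qed.

Lemma cl_match_edge (E : 'I_r -> 'I_s -> bool) :
  (forall j, E j (sg j)) ->
  forall v, cl_edge (Abar r s) (Bbar r s) (Cbar r s) (Kbar E) v (cl_match v).
Proof.
move=> sgE [i | [k | j]] /=.
- have lt_i := ltn_ord i.
  case: leqP => [le_i1 | lt1i] /=.
    rewrite /Abar inordK; lia.
  case: insubP => [j lt_r _ | ge_r] /=; first by rewrite /Bbar; lia.
  have {}ge_r : r <= s.+1 - i by rewrite leqNgt.
  rewrite /Abar inordK; lia.
- by case: pickP => [j /eqP <- | _] /=; [apply: sgE | apply: eqxx].
- have lt_j := ltn_ord j.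
  rewrite /Cbar inordK; lia.
Qed.

End ClosedLoopMatching.

Theorem lemma1 (r s : nat) (E : 'I_r -> 'I_s -> bool) :
  r <= s ->
  (exists M : {set ('I_r * 'I_s)%type}, is_matching E M && (#|M| == r)) ->
  exists M : {set (vtx s.+2 s r * vtx s.+2 s r)%type},
    is_perfect_matching
      (cl_edge (Abar r s) (Bbar r s) (Cbar r s) (Kbar E)) M.
Proof.
move=> le_rs [M /andP[matchM /eqP cardM]].
have [sg sg_inj sgE] := matching_full_inj matchM (etrans cardM (esym (card_ord r))).
exists [set (v, cl_match sg v) | v : vtx s.+2 s r].
apply: perfect_matching_graph.
- exact: can_inj (cl_matchK le_rs sg_inj).
- exact: (cl_match_edge le_rs sgE).
Qed.
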